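(* Let $\mathcal{H}$ be a Hilbert space, $K(\mathcal{H})$ the $C^*$-algebra of compact operators on $\mathcal{H}$, and $\mathcal{E}$ a Hilbert $K(\mathcal{H})$-module of (orthogonal) dimension one having the one-element orthonormal basis $\{y\}$ with $\langle y,y\rangle=\xi\otimes\xi$ for some unit vector $\xi\in\mathcal{H}$. Let $x,z\in\mathcal{E}$. If $x\parallel y$ and $y\parallel z$, then $x\parallel z$.
   Context: A (left) Hilbert $K(\mathcal{H})$-module is a left $K(\mathcal{H})$-module $\mathcal{E}$ with a $K(\mathcal{H})$-valued inner product $\langle\cdot,\cdot\rangle$, linear in the first variable and conjugate linear in the second, satisfying $\langle x,x\rangle\ge 0$ with equality iff $x=0$, $\langle ax,y\rangle = a\langle x,y\rangle$ and $\langle x,y\rangle^*=\langle y,x\rangle$, and complete for the norm $\|x\|=\|\langle x,x\rangle\|^{1/2}$. For $\xi,\eta\in\mathcal{H}$ (inner product $[\cdot,\cdot]$), $(\xi\otimes\eta)(\zeta)=[\zeta,\eta]\xi$. A system $\{x_\alpha\}_{\alpha\in\Lambda}\subset\mathcal{E}$ is orthonormal if $\|x_\alpha\|=1$, $\langle x_\alpha,x_\beta\rangle=0$ for $\alpha\ne\beta$, and each $\langle x_\alpha,x_\alpha\rangle$ is a minimal projection; it is an orthonormal basis if it generates a dense submodule of $\mathcal{E}$; the orthogonal dimension is the cardinality of an orthonormal basis. $x\parallel y$ (norm-parallel) means $\|x+\lambda y\|=\|x\|+\|y\|$ for some $\lambda\in\mathbb{C}$ with $|\lambda|=1$. *)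

From mathcomp Require Import all_boot all_order all_algebra.
From mathcomp Require Import classical_sets reals complex.
Set Implicit Arguments. Unset Strict Implicit. Unset Printing Implicit Defensive.
Import Order.TTheory GRing.Theory Num.Theory.
Local Open Scope ring_scope.
Local Open Scope classical_set_scope.

Section HilbertModules.
Variable R : realType.
Local Notation C := R[i].

Variable H : lmodType C.
Variable ip : H -> H -> C.

Definition hnorm (x : H) : R := Num.sqrt (complex.Re (ip x x)).

Definition is_hilbert_space : Prop :=
  [/\ (forall (a : C) (x y z : H), ip (a *: x + y) z = a * ip x z + ip y z),
      (forall x y : H, ip y x = (ip x y)^*),
      (forall x : H, 0 <= ip x x),
      (forall x : H, ip x x = 0 -> x = 0) &
      (forall u : nat -> H,
         (forall e : R, 0 < e -> exists N : nat, forall m n : nat,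
            (N <= m)%N -> (N <= n)%N -> hnorm (u m - u n) < e) ->
         exists l : H, forall e : R, 0 < e -> exists N : nat, forall n : nat,
            (N <= n)%N -> hnorm (u n - l) < e)].

Definition op_linear (T : H -> H) : Prop :=
  forall (a : C) (x y : H), T (a *: x + y) = a *: T x + T y.

(* compact operator: linear, and the image of the unit ball is relatively
   compact, i.e. (H being complete) totally bounded *)
Definition compact_op (T : H -> H) : Prop :=
  op_linear T /\
  forall e : R, 0 < e -> exists s : seq H, forall x : H, hnorm x <= 1 ->
    exists2 y, y \in s & hnorm (T x - y) < e.

Definition opnorm (T : H -> H) : R :=
  sup [set hnorm (T x) | x in [set x : H | hnorm x <= 1]].

(* adjoint relation: S = T^* *)
Definition is_adjoint (S T : H -> H) : Prop :=
  forall u v : H, ip (T u) v = ip u (S v).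

Definition positive_op (T : H -> H) : Prop := forall u : H, 0 <= ip (T u) u.

Definition projection (p : H -> H) : Prop :=
  compact_op p /\ (forall u, p (p u) = p u) /\ is_adjoint p p.

Definition minimal_projection (p : H -> H) : Prop :=
  projection p /\ (exists u, p u <> 0) /\
  forall q : H -> H, projection q -> (forall u, q (p u) = q u) ->
    (forall u, q u = 0) \/ (forall u, q u = p u).

Definition tensor_op (xi eta : H) : H -> H := fun zeta => ip zeta eta *: xi.

Variable E : lmodType C.
Variable act : (H -> H) -> E -> E.
Variable mip : E -> E -> (H -> H).

Definition mnorm (x : E) : R := Num.sqrt (opnorm (mip x x)).

Definition is_hilbert_KH_module : Prop :=
      (forall a b (x y : E) (l : C), compact_op a -> compact_op b ->
         [/\ act a (x + y) = act a x + act a y,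
             act (fun h => a h + b h) x = act a x + act b x,
             act (fun h => a (b h)) x = act a (act b x),
             act (fun h => l *: a h) x = l *: act a x &
             act a (l *: x) = l *: act a x]) /\
      (forall x y : E, compact_op (mip x y)) /\
      (forall (l : C) (x y z : E) (h : H),
         mip (l *: x + y) z h = l *: mip x z h + mip y z h) /\
      (forall a (x y : E) (h : H), compact_op a ->
         mip (act a x) y h = a (mip x y h)) /\
      (forall x y : E, is_adjoint (mip y x) (mip x y)) /\
      (forall x : E, positive_op (mip x x)) /\
      (forall x : E, (forall h, mip x x h = 0) -> x = 0) /\
      (forall u : nat -> E,
         (forall e : R, 0 < e -> exists N : nat, forall m n : nat,
            (N <= m)%N -> (N <= n)%N -> mnorm (u m - u n) < e) ->
         exists l : E, forall e : R, 0 < e -> exists N : nat, forall n : nat,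
            (N <= n)%N -> mnorm (u n - l) < e).

Inductive gen_submodule (y : E) : E -> Prop :=
  | gen_base : gen_submodule y y
  | gen_zero : gen_submodule y 0
  | gen_add x z : gen_submodule y x -> gen_submodule y z -> gen_submodule y (x + z)
  | gen_scale (l : C) x : gen_submodule y x -> gen_submodule y (l *: x)
  | gen_act a x : compact_op a -> gen_submodule y x -> gen_submodule y (act a x).

Definition singleton_orthonormal_basis (y : E) : Prop :=
  [/\ mnorm y = 1,
      minimal_projection (mip y y) &
      forall (x : E) (e : R), 0 < e ->
        exists2 w, gen_submodule y w & mnorm (x - w) < e].

Definition norm_parallel (x y : E) : Prop :=
  exists l : C, `|l| = 1 /\ mnorm (x + l *: y) = mnorm x + mnorm y.

End HilbertModules.

(* Every x in E equals <x,y> y: the remainder w = x - <x,y> y is orthogonal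
   to y, hence to the dense submodule generated by y, which forces <w,w> = 0.
   Hence <x,x> is the rank-one operator eta (x) eta with eta = <x,y> xi, so
   x |-> <x,y> xi is a linear isometry of E into H sending y to the unit
   vector xi.  In H, ||a + b|| = ||a|| + ||b|| holds exactly when
   ||b|| a = ||a|| b, and these colinearity relations compose through the
   nonzero vector xi. *)

From Pilot Require Import Defs.
From mathcomp Require Import all_boot all_order all_algebra.
From mathcomp Require Import classical_sets reals complex.
From mathcomp Require Import boolp ring.
Import Order.TTheory GRing.Theory Num.Theory.
Local Open Scope complex_scope.
Local Open Scope ring_scope.
Set Implicit Arguments. Unset Strict Implicit.

Lemma ge0_ReK (R : realType) (q : R[i]) : 0 <= q -> (complex.Re q)%:C = q.
Proof. by move=> q0; apply: RRe_real; apply: ger0_real. Qed.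

Lemma ge0_Re (R : realType) (q : R[i]) : 0 <= q -> 0 <= complex.Re q.
Proof. by move=> q0; rewrite -ler0c ge0_ReK. Qed.

Lemma ge0_le_eps_eq0 (R : realType) (q : R[i]) (c : R) : 0 <= c -> 0 <= q ->
  (forall e, 0 < e -> q <= (e * c)%:C) -> q = 0.
Proof.
move=> c0 q0 small; apply/eqP; rewrite eq_le q0 andbT -(ge0_ReK q0).
rewrite -[0]/(0%:C) lecR; apply/ler_addgt0Pr => e e0; rewrite add0r.
have c1_gt0 : 0 < c + 1 by rewrite ltr_wpDl.
have := small (e / (c + 1)) (divr_gt0 e0 c1_gt0).
rewrite -{1}(ge0_ReK q0) lecR => /le_trans; apply.
by rewrite mulrAC ler_pdivrMr // ler_pM2l // lerDl.
Qed.

Section InnerProductSpace.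
Variables (R : realType) (H : lmodType R[i]) (ip : H -> H -> R[i]).
Hypothesis hH : is_hilbert_space ip.
Local Notation hnorm := (hnorm ip).

Lemma ipDl x y z : ip (x + y) z = ip x z + ip y z.
Proof. by case: hH => lin _ _ _ _; rewrite -[x]scale1r lin mul1r scale1r. Qed.

Lemma ip0l z : ip 0 z = 0.
Proof. by apply/esym/(@addrI _ (ip 0 z)); rewrite -ipDl !addr0. Qed.

Lemma ipZl a x z : ip (a *: x) z = a * ip x z.
Proof. by case: hH => lin _ _ _ _; rewrite -[a *: x]addr0 lin ip0l addr0. Qed.

Lemma ipC x y : ip x y = (ip y x)^*.
Proof. by case: hH. Qed.

Lemma ipNl x z : ip (- x) z = - ip x z.
Proof. by rewrite -scaleN1r ipZl mulN1r. Qed.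

Lemma ipBl x y z : ip (x - y) z = ip x z - ip y z.
Proof. by rewrite ipDl ipNl. Qed.

Lemma ipDr x y z : ip z (x + y) = ip z x + ip z y.
Proof. by rewrite ipC ipDl rmorphD /= -!ipC. Qed.

Lemma ipZr a x z : ip z (a *: x) = a^* * ip z x.
Proof. by rewrite ipC ipZl rmorphM /= -ipC. Qed.

Lemma ip0r z : ip z 0 = 0.
Proof. by rewrite ipC ip0l rmorph0. Qed.

Lemma ipNr x z : ip z (- x) = - ip z x.
Proof. by rewrite ipC ipNl rmorphN /= -ipC. Qed.

Lemma ipBr x y z : ip z (x - y) = ip z x - ip z y.
Proof. by rewrite ipDr ipNr. Qed.

Lemma ipxx_ge0 x : 0 <= ip x x.
Proof. by case: hH. Qed.

Lemma ipxx_eq0 x : ip x x = 0 -> x = 0.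
Proof. by case: hH => _ _ _ + _; apply. Qed.

Lemma ipr_inj a b : (forall u, ip u a = ip u b) -> a = b.
Proof.
move=> eq_ab; apply/eqP; rewrite -subr_eq0; apply/eqP/ipxx_eq0.
by rewrite ipBr eq_ab subrr.
Qed.

Lemma hnorm_ge0 x : 0 <= hnorm x.
Proof. exact: sqrtr_ge0. Qed.

Lemma hnormC_ge0 x : 0 <= (hnorm x)%:C.
Proof. by rewrite ler0c hnorm_ge0. Qed.

Lemma hnormCK x : (hnorm x)%:C ^+ 2 = ip x x.
Proof.
by rewrite -rmorphXn /= sqr_sqrtr ?ge0_ReK ?ge0_Re ?ipxx_ge0.
Qed.

Lemma hnorm0 : hnorm 0 = 0.
Proof. by rewrite /Defs.hnorm ip0l sqrtr0. Qed.

Lemma hnorm_eq0 x : hnorm x = 0 -> x = 0.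
Proof. by move=> x0; apply: ipxx_eq0; rewrite -hnormCK x0 expr0n. Qed.

Lemma hnormZ a x : (hnorm (a *: x))%:C = `|a| * (hnorm x)%:C.
Proof.
apply/eqP; rewrite -(@eqrXn2 _ 2) ?mulr_ge0 ?normr_ge0 ?hnormC_ge0 //.
by rewrite exprMn !hnormCK ipZl ipZr normCK mulrA.
Qed.

Lemma hnormZ_unit a x : `|a| = 1 -> hnorm (a *: x) = hnorm x.
Proof. by move=> a1; apply: complexI; rewrite hnormZ a1 mul1r. Qed.

Lemma hnormZ_ge0 k x : 0 <= k -> hnorm (k%:C *: x) = k * hnorm x.
Proof.
by move=> k0; apply: complexI; rewrite hnormZ rmorphM ger0_norm ?lecR.
Qed.

Lemma cauchy_schwarz u v : `|ip u v| <= (hnorm u)%:C * (hnorm v)%:C.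
Proof.
have [v0|vNZ] := eqVneq (ip v v) 0.
  by rewrite (ipxx_eq0 v0) ip0r normr0 mulr_ge0 ?hnormC_ge0.
set a := ip u v; set r := ip v v.
have r_gt0 : 0 < r by rewrite lt_def vNZ ipxx_ge0.
have rJ : r^* = r by rewrite /r -ipC.
have := ipxx_ge0 (u - (a / r) *: v).
rewrite !(ipBl, ipBr, ipZl, ipZr) -/r [ip v u]ipC -/a rmorphM /= fmorphV /= rJ.
have -> : ip u u - a^* / r * a - (a / r * a^* - a / r * (a^* / r * r)) =
  ip u u - a * a^* / r by field.
rewrite subr_ge0 ler_pdivrMr // -normCK /r -!hnormCK -exprMn.
by rewrite ler_pXn2r // nnegrE ?normr_ge0 // mulr_ge0 ?hnormC_ge0.
Qed.

Lemma hnormD_le a b : hnorm (a + b) <= hnorm a + hnorm b.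
Proof.
rewrite -lecR -(ler_pXn2r (n := 2)) ?nnegrE ?lecR ?addr_ge0 ?hnorm_ge0 //.
rewrite rmorphD /= sqrrD !hnormCK !(ipDl, ipDr) [ip b a]ipC.
rewrite addrA -(addrA (ip a a)) lerD2r lerD2l -mulr_natl.
have -> : ip a b + (ip a b)^* = 2%:R * 'Re (ip a b).
  by rewrite ReE mulrC divfK ?pnatr_eq0.
rewrite ler_pM2l ?ltr0n // (le_trans (leif_Re_Creal _).1) //.
exact: cauchy_schwarz.
Qed.

Lemma op_linear0 (T : H -> H) : op_linear T -> T 0 = 0.
Proof.
move=> linT; have := linT 1 0 0.
by rewrite !scale1r addr0 -{1}[T 0]addr0 => /addrI.
Qed.

Lemma op_linearD (T : H -> H) :
  op_linear T -> forall x y, T (x + y) = T x + T y.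
Proof. by move=> linT x y; rewrite -[x]scale1r linT !scale1r. Qed.

Lemma op_linearZ (T : H -> H) :
  op_linear T -> forall a x, T (a *: x) = a *: T x.
Proof.
by move=> linT a x; rewrite -[a *: x]addr0 linT (op_linear0 linT) addr0.
Qed.

Lemma self_adjoint_eq0 (T : H -> H) : op_linear T -> is_adjoint ip T T ->
  (forall h, ip (T h) h = 0) -> forall h, T h = 0.
Proof.
move=> linT adjT quad0 h; apply: ipxx_eq0.
have := quad0 (h + T h).
rewrite op_linearD // !(ipDl, ipDr) !quad0 (adjT (T h) h).
by rewrite add0r addr0 -mulr2n => /eqP; rewrite mulrn_eq0 => /eqP.
Qed.

Local Notation opnorm := (opnorm ip).

Section BoundedOperator.
Variables (T : H -> H) (M : R).
Hypothesis boundT : forall x, hnorm x <= 1 -> hnorm (T x) <= M.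

Lemma hnorm_le_opnorm x : hnorm x <= 1 -> hnorm (T x) <= opnorm T.
Proof.
by move=> x1; apply: ub_le_sup; [exists M => _ [u /boundT + <-] | exists x].
Qed.

Lemma opnorm_le : opnorm T <= M.
Proof.
apply: ge_sup; last by move=> _ [u /boundT + <-].
by exists (hnorm (T 0)), 0; rewrite //= hnorm0 ler01.
Qed.

Lemma opnorm_ge0 : 0 <= opnorm T.
Proof.
by rewrite (le_trans (hnorm_ge0 (T 0))) ?hnorm_le_opnorm ?hnorm0 ?ler01.
Qed.

End BoundedOperator.

Lemma compact_op_bounded T :
  compact_op ip T -> exists M, forall x, hnorm x <= 1 -> hnorm (T x) <= M.
Proof.
case=> _ /(_ 1 ltr01) [s net].
exists (1 + \big[Order.max/0]_(z <- s) hnorm z) => x /net [y ys Txy].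
rewrite -[T x](subrK y); apply: (le_trans (hnormD_le _ _)).
by rewrite lerD ?(ltW Txy) //; apply: (le_bigmax_seq _ _ _ _ ys).
Qed.

Lemma compact_hnorm_le T x :
  compact_op ip T -> hnorm (T x) <= opnorm T * hnorm x.
Proof.
move=> cT; have [M boundT] := compact_op_bounded cT.
have [x0|xNZ] := eqVneq (hnorm x) 0.
  by rewrite (hnorm_eq0 x0) (op_linear0 cT.1) hnorm0 mulr0.
set k := hnorm x; have k_gt0 : 0 < k by rewrite lt_def xNZ hnorm_ge0.
have -> : x = k%:C *: (k^-1%:C *: x).
  by rewrite scalerA -rmorphM /= mulfV // scale1r.
rewrite (op_linearZ cT.1) hnormZ_ge0 ?(ltW k_gt0) // mulrC.
rewrite ler_wpM2r ?(ltW k_gt0) // (hnorm_le_opnorm boundT) //.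
by rewrite hnormZ_ge0 ?invr_ge0 ?(ltW k_gt0) // mulVf ?gt_eqF.
Qed.

Lemma opnorm_tensor u : opnorm (tensor_op ip u u) = hnorm u ^+ 2.
Proof.
have boundT x : hnorm x <= 1 -> hnorm (tensor_op ip u u x) <= hnorm u ^+ 2.
  move=> x1; rewrite -lecR /tensor_op hnormZ rmorphXn /= expr2.
  rewrite ler_wpM2r ?hnormC_ge0 // (le_trans (cauchy_schwarz x u)) //.
  by rewrite -[X in _ <= X]mul1r ler_wpM2r ?hnormC_ge0 // -[1]/(1%:C) lecR.
apply/le_anti/andP; split; first exact: opnorm_le boundT.
have [u0|uNZ] := eqVneq (hnorm u) 0.
  by rewrite u0 expr0n (opnorm_ge0 boundT).
set k := hnorm u; have k_gt0 : 0 < k by rewrite lt_def uNZ hnorm_ge0.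
have v1 : hnorm (k^-1%:C *: u) <= 1.
  by rewrite hnormZ_ge0 ?invr_ge0 ?(ltW k_gt0) // mulVf ?gt_eqF.
apply: le_trans (hnorm_le_opnorm boundT v1).
rewrite /tensor_op ipZl -hnormCK -/k -rmorphXn /= -rmorphM /=.
by rewrite expr2 mulKf ?gt_eqF // hnormZ_ge0 ?(ltW k_gt0) // -expr2.
Qed.

Lemma hnormD_eq_colinear a b :
  hnorm (a + b) = hnorm a + hnorm b <-> (hnorm b)%:C *: a = (hnorm a)%:C *: b.
Proof.
split=> [eqD | colin]; last first.
  have [b0|bNZ] := eqVneq (hnorm b) 0.
    by rewrite (hnorm_eq0 b0) addr0 hnorm0 addr0.
  apply: (mulfI bNZ); rewrite -hnormZ_ge0 ?hnorm_ge0 //.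
  rewrite scalerDr colin -scalerDl.
  by rewrite -rmorphD hnormZ_ge0 ?addr_ge0 ?hnorm_ge0 // mulrC.
set na := (hnorm a)%:C; set nb := (hnorm b)%:C.
have naJ : na^* = na by rewrite conj_Creal // ger0_real ?hnormC_ge0.
have nbJ : nb^* = nb by rewrite conj_Creal // ger0_real ?hnormC_ge0.
(* (||a|| + ||b||)^2 = ||a + b||^2 determines <b,a>, and then the vector
   ||b|| a - ||a|| b has norm 0. *)
have ipba : ip b a = 2%:R * na * nb - ip a b.
  have := hnormCK (a + b).
  rewrite eqD rmorphD /= !(ipDl, ipDr) -!hnormCK -/na -/nb => expand.
  apply/eqP; rewrite -subr_eq0; apply/eqP.
  transitivity (na ^+ 2 + ip a b + (ip b a + nb ^+ 2) - (na + nb) ^+ 2).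
    by ring.
  by rewrite expand subrr.
apply/eqP; rewrite -subr_eq0; apply/eqP/ipxx_eq0.
by rewrite !(ipBl, ipBr, ipZl, ipZr) naJ nbJ ipba -!hnormCK -/na -/nb; ring.
Qed.

Lemma hnormD_eq_trans a b c l m : `|l| = 1 -> `|m| = 1 -> b != 0 ->
  hnorm (a + l *: b) = hnorm a + hnorm b ->
  hnorm (b + m *: c) = hnorm b + hnorm c ->
  hnorm (a + (l * m) *: c) = hnorm a + hnorm c.
Proof.
move=> l1 m1 bNZ.
have lm1 : `|l * m| = 1 by rewrite normrM l1 m1 mulr1.
move=> eq_ab eq_bc; rewrite -(hnormZ_unit c lm1).
rewrite -(hnormZ_unit b l1) in eq_ab; rewrite -(hnormZ_unit c m1) in eq_bc.
move: eq_ab eq_bc => /hnormD_eq_colinear eq_ab /hnormD_eq_colinear eq_bc.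
apply/hnormD_eq_colinear; rewrite !hnormZ_unit // in eq_ab eq_bc *.
have nbNZ : (hnorm b)%:C != 0.
  by apply: contraNneq bNZ => /complexI/hnorm_eq0 ->.
have eq_ac : (hnorm c)%:C *: ((hnorm b)%:C *: a) =
    ((hnorm a)%:C * l) *: ((hnorm b)%:C *: (m *: c)).
  by rewrite eq_ab -eq_bc !scalerA; congr (_ *: _); ring.
apply: (scalerI nbNZ); rewrite scalerA mulrC -[_ *: a]scalerA eq_ac !scalerA.
by congr (_ *: _); ring.
Qed.

End InnerProductSpace.

Section HilbertModule.
Variables (R : realType) (H : lmodType R[i]) (ip : H -> H -> R[i]).
Variables (E : lmodType R[i]) (act : (H -> H) -> E -> E).
Variable mip : E -> E -> H -> H.
Hypotheses (hH : is_hilbert_space ip) (hE : is_hilbert_KH_module ip act mip).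
Local Notation hnorm := (hnorm ip).
Local Notation mnorm := (mnorm ip mip).

Lemma mip_compact x y : compact_op ip (mip x y).
Proof. by case: hE => _ []. Qed.

Lemma mip_linear l x y z h : mip (l *: x + y) z h = l *: mip x z h + mip y z h.
Proof. by case: hE => _ [_ []]. Qed.

Lemma mip_act a :
  compact_op ip a -> forall x y h, mip (act a x) y h = a (mip x y h).
Proof. by move=> ca x y h; case: hE => _ [_ [_ [hact _]]]; apply: hact. Qed.

Lemma mip_adjoint x y u v : ip (mip x y u) v = ip u (mip y x v).
Proof. by case: hE => _ [_ [_ [_ [+ _]]]]; apply. Qed.

Lemma mip_ge0 x h : 0 <= ip (mip x x h) h.
Proof. by case: hE => _ [_ [_ [_ [_ [+ _]]]]]; apply. Qed.

Lemma mip_eq0 x : (forall h, mip x x h = 0) -> x = 0.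
Proof. by case: hE => _ [_ [_ [_ [_ [_ [heq0 _]]]]]]; apply: heq0. Qed.

Lemma mipDl x y z h : mip (x + y) z h = mip x z h + mip y z h.
Proof. by rewrite -[x]scale1r mip_linear !scale1r. Qed.

Lemma mip0l z h : mip 0 z h = 0.
Proof. by apply/esym/(@addrI _ (mip 0 z h)); rewrite -mipDl !addr0. Qed.

Lemma mipZl l x z h : mip (l *: x) z h = l *: mip x z h.
Proof. by rewrite -[l *: x]addr0 mip_linear mip0l addr0. Qed.

Lemma mipBl x y z h : mip (x - y) z h = mip x z h - mip y z h.
Proof. by rewrite mipDl -scaleN1r mipZl scaleN1r. Qed.

Lemma mipBr x y z h : mip z (x - y) h = mip z x h - mip z y h.
Proof.
apply: (ipr_inj hH) => u.
by rewrite (ipBr hH) -!mip_adjoint mipBl (ipBl hH).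
Qed.

Lemma mip_eq0_sym x y : (forall h, mip x y h = 0) -> forall h, mip y x h = 0.
Proof.
move=> xy0 h; apply: (ipr_inj hH) => u.
by rewrite -mip_adjoint xy0 (ip0l hH) (ip0r hH).
Qed.

Lemma mip_quad_le x h :
  ip (mip x x h) h <= (mnorm x ^+ 2 * hnorm h ^+ 2)%:C.
Proof.
have [M boundX] := compact_op_bounded hH (mip_compact x x).
rewrite -(ger0_norm (mip_ge0 x h)) (le_trans (cauchy_schwarz hH _ _)) //.
rewrite -rmorphM /= lecR /Defs.mnorm (sqr_sqrtr (opnorm_ge0 hH boundX)).
rewrite expr2 mulrA ler_wpM2r ?hnorm_ge0 //.
exact: (compact_hnorm_le hH _ (mip_compact x x)).
Qed.

Section Generator.
Variable y : E.

Lemma act_mip_idem :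
  (forall h, mip y y (mip y y h) = mip y y h) -> act (mip y y) y = y.
Proof.
move=> idem; set v := y - act (mip y y) y.
have vy0 h : mip v y h = 0.
  by rewrite mipBl (mip_act (mip_compact y y)) idem subrr.
have vv0 h : mip v v h = 0.
  rewrite {1}/v mipBl (mip_act (mip_compact y y)) !(mip_eq0_sym vy0).
  by rewrite (op_linear0 (mip_compact y y).1) subrr.
by apply/eqP; rewrite eq_sym -subr_eq0; apply/eqP/mip_eq0.
Qed.

Lemma mip_fix_r x h :
  act (mip y y) y = y -> mip x y (mip y y h) = mip x y h.
Proof.
move=> fix_y; apply: (ipr_inj hH) => u.
by rewrite -!mip_adjoint -(mip_act (mip_compact y y)) fix_y.
Qed.

Lemma gen_submodule_orth w g : (forall h, mip w y h = 0) ->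
  gen_submodule ip act y g -> forall h, mip g w h = 0.
Proof.
move=> wy0; elim=> [| | a b _ iha _ ihb | l a _ iha | a b ca _ iha] h.
- exact: mip_eq0_sym.
- exact: mip0l.
- by rewrite mipDl iha ihb addr0.
- by rewrite mipZl iha scaler0.
- by rewrite (mip_act ca) iha (op_linear0 ca.1).
Qed.

Lemma orth_dense_eq0 w :
  (forall x e, 0 < e ->
     exists2 g, gen_submodule ip act y g & mnorm (x - g) < e) ->
  (forall h, mip w y h = 0) -> w = 0.
Proof.
move=> dense_y wy0.
have quad_small h e : 0 < e -> ip (mip w w h) h <= (e * hnorm h ^+ 2)%:C.
  move=> e_gt0; have [g gy wg] : exists2 g, gen_submodule ip act y g &
      mnorm (w - g) < Num.sqrt e by apply: dense_y; rewrite sqrtr_gt0.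
  have gw0 := gen_submodule_orth wy0 gy.
  have mipD k : mip (w - g) (w - g) k = mip w w k + mip g g k.
    by rewrite mipBl !mipBr gw0 (mip_eq0_sym gw0) subr0 sub0r opprK.
  have le_wg : ip (mip w w h) h <= ip (mip (w - g) (w - g) h) h.
    by rewrite mipD (ipDl hH) lerDl mip_ge0.
  apply: (le_trans le_wg); apply: (le_trans (mip_quad_le _ _)).
  rewrite lecR ler_wpM2r ?exprn_ge0 ?hnorm_ge0 // -[e](sqr_sqrtr (ltW e_gt0)).
  by rewrite ler_pXn2r ?nnegrE ?sqrtr_ge0 // ltW.
have quad0 h : ip (mip w w h) h = 0.
  apply: (ge0_le_eps_eq0 (exprn_ge0 2 (hnorm_ge0 ip h)) (mip_ge0 w h)).
  exact: quad_small.
exact/mip_eq0/(self_adjoint_eq0 hH (mip_compact w w).1 (mip_adjoint w w) quad0).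
Qed.

Section UnitVectorBasis.
Variable xi : H.
Hypotheses (hxi : hnorm xi = 1) (hy : singleton_orthonormal_basis ip act mip y).
Hypothesis hyy : forall h, mip y y h = tensor_op ip xi xi h.

Lemma mip_basis_xi : mip y y xi = xi.
Proof. by rewrite hyy /tensor_op -(hnormCK hH) hxi rmorph1 expr1n scale1r. Qed.

Lemma basis_act_fix : act (mip y y) y = y.
Proof.
apply: act_mip_idem => h; rewrite (hyy h) /tensor_op.
by rewrite (op_linearZ (mip_compact y y).1) mip_basis_xi.
Qed.

Lemma mip_basis_r x h : mip x y h = ip h xi *: mip x y xi.
Proof.
rewrite -(mip_fix_r x h basis_act_fix) hyy /tensor_op.
exact: (op_linearZ (mip_compact x y).1).
Qed.

Lemma eq_act_mip x : x = act (mip x y) y.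
Proof.
case: hy => _ _ dense_y.
apply/eqP; rewrite -subr_eq0; apply/eqP/(orth_dense_eq0 dense_y) => h.
rewrite mipBl (mip_act (mip_compact x y)).
by rewrite (mip_fix_r _ _ basis_act_fix) subrr.
Qed.

Lemma mip_rank_one x h : mip x x h = tensor_op ip (mip x y xi) (mip x y xi) h.
Proof.
by rewrite {1}[x]eq_act_mip (mip_act (mip_compact x y)) mip_basis_r mip_adjoint.
Qed.

Lemma mnorm_coord x : mnorm x = hnorm (mip x y xi).
Proof.
rewrite /Defs.mnorm (_ : mip x x = tensor_op ip (mip x y xi) (mip x y xi)).
  by rewrite (opnorm_tensor hH) sqrtr_sqr ger0_norm ?hnorm_ge0.
exact/funext/mip_rank_one.
Qed.

End UnitVectorBasis.

End Generator.

End HilbertModule.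

Unset Implicit Arguments.

Theorem corollary2p6 (R : realType) (H : lmodType R[i]) (ip : H -> H -> R[i])
  (E : lmodType R[i]) (act : (H -> H) -> E -> E) (mip : E -> E -> (H -> H))
  (hH : is_hilbert_space ip)
  (hE : is_hilbert_KH_module ip act mip)
  (y : E) (xi : H)
  (hxi : hnorm ip xi = 1)
  (hy : singleton_orthonormal_basis ip act mip y)
  (hyy : forall h : H, mip y y h = tensor_op ip xi xi h)
  (x z : E) :
  norm_parallel ip mip x y -> norm_parallel ip mip y z -> norm_parallel ip mip x z.
Proof.
have xiNZ : xi != 0.
  apply/eqP => xi0; move: hxi.
  by rewrite xi0 (hnorm0 hH) => /eqP; rewrite eq_sym oner_eq0.
move=> [l [l1 par_xy]] [m [m1 par_yz]].
exists (l * m); split; first by rewrite normrM l1 m1 mulr1.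
move: par_xy par_yz; rewrite !(mnorm_coord hH hE hxi hy hyy).
rewrite !(mipDl hE) !(mipZl hE) (mip_basis_xi hH hxi hyy).
exact: hnormD_eq_trans.
Qed.
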